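(* Let $t\geq 1$ be real with $C(t)>0$. Then $\chi(G)\geq \lfloor t\rfloor+1$.
   Context: Let $G$ be a simple graph with vertex set $V=\{1,\dots,n\}$, edge set $E$, adjacency matrix $A$ and chromatic number $\chi(G)$. Let $e$ denote the all-ones vector, $\langle M,N\rangle=\operatorname{trace}(M^TN)$, and $Y\geq 0$ mean entrywise nonnegativity. For real $t\geq 1$, $P(t)$ is the semidefinite program $$\min \tfrac12\langle A,Y\rangle \ \text{ s.t. } \begin{pmatrix} Y & e\\ e^T & t\end{pmatrix}\succeq 0,\ \operatorname{diag}(Y)=e,\ Y\geq 0,$$ over symmetric $n\times n$ matrices $Y$, and $C(t)$ denotes its optimal value. *)

From HB Require Import structures.
From mathcomp Require Import all_boot all_order all_algebra.
From mathcomp Require Import classical_sets reals.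
Set Implicit Arguments. Unset Strict Implicit. Unset Printing Implicit Defensive.
Import Order.TTheory GRing.Theory Num.Theory.
Local Open Scope ring_scope.
Local Open Scope classical_set_scope.

Definition simple_graph n (E : rel 'I_n) : Prop :=
  (forall i j, E i j = E j i) /\ (forall i, ~~ E i i).

Definition adjmx (R : realType) n (E : rel 'I_n) : 'M[R]_n :=
  \matrix_(i, j) (E i j)%:R.

Definition psd (R : realType) m (M : 'M[R]_m) : Prop :=
  M^T = M /\ forall x : 'cV[R]_m, 0 <= (x^T *m M *m x) 0 0.

Definition frob (R : realType) n (M N : 'M[R]_n) : R := \tr (M^T *m N).

Definition bordered (R : realType) n (Y : 'M[R]_n) (t : R) : 'M[R]_(n + 1) :=
  block_mx Y (const_mx 1 : 'cV[R]_n) (const_mx 1 : 'rV[R]_n) (t%:M : 'M[R]_1).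

Definition feasible (R : realType) n (t : R) (Y : 'M[R]_n) : Prop :=
  Y^T = Y /\ psd (bordered Y t) /\ (forall i, Y i i = 1) /\
  (forall i j, 0 <= Y i j).

Definition Cval (R : realType) n (E : rel 'I_n) (t : R) : R :=
  inf [set 2^-1 * frob (adjmx R E) Y | Y in [set Y | feasible t Y]].

Definition colorable n (E : rel 'I_n) (k : nat) : bool :=
  [exists f : {ffun 'I_n -> 'I_k}, [forall i, forall j, E i j ==> (f i != f j)]].

Lemma colorable_exists n (E : rel 'I_n) : simple_graph E -> exists k, colorable E k.
Proof.
move=> [_ irr]; exists n; apply/existsP; exists [ffun i => i].
apply/forallP => i; apply/forallP => j; apply/implyP => Eij.
rewrite !ffunE; apply/eqP => eij; subst j; by move: (irr i); rewrite Eij.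
Qed.

Definition chromatic_number n (E : rel 'I_n) (HG : simple_graph E) : nat :=
  ex_minn (colorable_exists HG).

(* If G has a proper colouring g with k <= t colours, the 0/1 matrix
   Y i j = [g i == g j] is feasible for P(t) and has objective 0, so C(t) <= 0.
   Positive semidefiniteness of the bordered matrix comes from writing its
   quadratic form at (u, w) as  sum_c (S_c + w)^2 + (t - k) w^2,  where S_c is
   the sum of the entries of u on colour class c. *)
From HB Require Import structures.
From mathcomp Require Import all_boot all_order all_algebra.
From mathcomp Require Import classical_sets reals ring.
Import Order.TTheory GRing.Theory Num.Theory.
Set Implicit Arguments. Unset Strict Implicit. Unset Printing Implicit Defensive.
Local Open Scope ring_scope.

Lemma bordered_quadE (R : realType) n (Y : 'M[R]_n) (t : R) (u : 'cV[R]_n) (v : 'cV[R]_1) :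
  ((col_mx u v)^T *m bordered Y t *m col_mx u v) 0 0 =
  (u^T *m Y *m u) 0 0 + 2 * v 0 0 * \sum_i u i 0 + t * v 0 0 ^+ 2.
Proof.
rewrite tr_col_mx /bordered mul_row_block mul_row_col mulmxDl !mxE big_ord1 !mxE.
under [\sum_j (v^T *m _) 0 j * _]eq_bigr => i _ do rewrite !mxE big_ord1 !mxE mulr1.
under [\sum_j u^T 0 j * _]eq_bigr => i _ do rewrite !mxE mulr1.
rewrite big_ord1 !mxE mulr1n -mulr_sumr -/(v 0 0); ring.
Qed.

Section ColoringGram.
Variables (R : realType) (n k : nat) (g : 'I_n -> 'I_k).

Definition coloring_gram : 'M[R]_n := \matrix_(i, j) (g i == g j)%:R.

Let class_sum (u : 'cV[R]_n) (c : 'I_k) := \sum_(i | g i == c) u i 0.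

Lemma sum_class_sum (u : 'cV[R]_n) : \sum_i u i 0 = \sum_c class_sum u c.
Proof. exact: partition_big. Qed.

Lemma mul_coloring_gram (u : 'cV[R]_n) j :
  (u^T *m coloring_gram) 0 j = class_sum u (g j).
Proof.
rewrite mxE [RHS]big_mkcond; apply: eq_bigr => i _.
by rewrite !mxE; case: eqP; rewrite ?mulr1 ?mulr0.
Qed.

Lemma coloring_gram_quadE (u : 'cV[R]_n) :
  (u^T *m coloring_gram *m u) 0 0 = \sum_c class_sum u c ^+ 2.
Proof.
rewrite mxE (partition_big g predT) //=; apply: eq_bigr => c _.
rewrite expr2 mulr_sumr; apply: eq_bigr => j /eqP gj.
by rewrite mul_coloring_gram gj mulrC.
Qed.

Lemma coloring_gram_sym : coloring_gram^T = coloring_gram.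
Proof. by apply/matrixP => i j; rewrite !mxE eq_sym. Qed.

Lemma psd_bordered_coloring_gram (t : R) : k%:R <= t -> psd (bordered coloring_gram t).
Proof.
move=> kt; split.
  by rewrite /bordered tr_block_mx coloring_gram_sym !trmx_const tr_scalar_mx.
move=> x; rewrite -(vsubmxK x) bordered_quadE coloring_gram_quadE sum_class_sum.
set w := _ 0 0; set S := class_sum _.
have sqr_sum : \sum_c (S c + w) ^+ 2 =
    \sum_c S c ^+ 2 + 2 * w * \sum_c S c + k%:R * w ^+ 2.
  have -> : k%:R * w ^+ 2 = \sum_(c < k) w ^+ 2 by rewrite sumr_const card_ord mulr_natl.
  rewrite mulr_sumr -!big_split /=.
  by apply: eq_bigr => c _; ring.
have -> : \sum_c S c ^+ 2 + 2 * w * \sum_c S c + t * w ^+ 2 =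
          \sum_c (S c + w) ^+ 2 + (t - k%:R) * w ^+ 2 by rewrite sqr_sum; ring.
by rewrite addr_ge0 ?sumr_ge0 // => [c _|]; rewrite ?sqr_ge0 // mulr_ge0 ?sqr_ge0 ?subr_ge0.
Qed.
End ColoringGram.

Lemma coloring_gram_feasible (R : realType) n k (g : 'I_n -> 'I_k) (t : R) :
  k%:R <= t -> feasible t (coloring_gram R g).
Proof.
move=> kt; split; first exact: coloring_gram_sym.
split; first exact: psd_bordered_coloring_gram.
by split=> [i|i j]; rewrite mxE ?eqxx ?ler0n.
Qed.

Lemma frob_adjmx_ge0 (R : realType) n (E : rel 'I_n) (Y : 'M[R]_n) :
  (forall i j, 0 <= Y i j) -> 0 <= frob (adjmx R E) Y.
Proof.
move=> Yge0; apply: sumr_ge0 => i _; rewrite mxE.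
by apply: sumr_ge0 => j _; rewrite !mxE mulr_ge0 ?ler0n.
Qed.

Lemma frob_adjmx_coloring_gram (R : realType) n k (E : rel 'I_n) (g : 'I_n -> 'I_k) :
  (forall i j, E i j -> g i != g j) -> frob (adjmx R E) (coloring_gram R g) = 0.
Proof.
move=> proper_g; apply: big1 => i _; rewrite mxE.
apply: big1 => j _; rewrite !mxE.
by case: (E j i) (proper_g j i) => [/(_ isT)/negbTE ->|_]; rewrite ?mulr0 ?mul0r.
Qed.

Lemma Cval_le (R : realType) n (E : rel 'I_n) (t : R) (Y : 'M[R]_n) :
  feasible t Y -> Cval E t <= 2^-1 * frob (adjmx R E) Y.
Proof.
move=> FY; apply: ge_inf; last by exists Y.
exists 0 => _ [Z [_ [_ [_ Zge0]]] <-].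
by rewrite mulr_ge0 ?invr_ge0 ?ler0n ?frob_adjmx_ge0.
Qed.

Lemma Cval_le0_colorable (R : realType) n (E : rel 'I_n) (t : R) k :
  colorable E k -> k%:R <= t -> Cval E t <= 0.
Proof.
move=> /existsP [g /forallP proper_g] kt.
have -> : 0 = 2^-1 * frob (adjmx R E) (coloring_gram R g) :> R.
  rewrite frob_adjmx_coloring_gram ?mulr0 // => i j Eij.
  by have /forallP/(_ j)/implyP := proper_g i; apply.
exact/Cval_le/coloring_gram_feasible.
Qed.

Theorem mainTheorem4 (R : realType) (n : nat) (E : rel 'I_n)
  (HG : simple_graph E) (t : R) :
  1 <= t -> 0 < Cval E t ->
  Num.floor t + 1 <= (chromatic_number HG)%:Z.
Proof.
move=> _ Cpos; rewrite leNgt ltzD1 floor_ge_int; apply/negP => chi_le_t.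
have chi_colorable : colorable E (chromatic_number HG).
  by rewrite /chromatic_number; case: ex_minnP.
by have := Cval_le0_colorable chi_colorable chi_le_t; rewrite leNgt Cpos.
Qed.
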